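(* Sign correctness may fail for multifold edges under monotonic semantics: there exist a gradual semantics $\sigma$ satisfying monotonicity on all acyclic QBAFs, an acyclic QBAF $\mathcal{Q}=\langle\mathcal{A},\mathcal{R}^-,\mathcal{R}^+,\tau\rangle$, an argument $\alpha\in\mathcal{A}$ and an edge $r\in\mathcal{R}$ that is multifold w.r.t. $\alpha$ such that sign correctness fails, i.e. either $r\in\mathcal{R}^-$ and $\phi^\alpha_\sigma(r)>0$, or $r\in\mathcal{R}^+$ and $\phi^\alpha_\sigma(r)<0$.
   Context: A QBAF is a quadruple $\mathcal{Q}=\langle\mathcal{A},\mathcal{R}^-,\mathcal{R}^+,\tau\rangle$ with $\mathcal{A}$ a finite set of arguments, $\mathcal{R}^-,\mathcal{R}^+\subseteq\mathcal{A}\times\mathcal{A}$ disjoint attack and support relations, and $\tau:\mathcal{A}\to[0,1]$ base scores; $\mathcal{R}=\mathcal{R}^-\cup\mathcal{R}^+$, $\mathcal{R}(\beta)=\{(\beta,\gamma)\in\mathcal{R}\}$; acyclic means $(\mathcal{A},\mathcal{R})$ has no directed cycle. A gradual semantics $\sigma$ assigns strengths in $[0,1]$ to arguments of QBAFs. For $\mathcal{S}\subseteq\mathcal{R}$, $\sigma_{\mathcal{S}}(\alpha)$ is the strength of $\alpha$ in $\langle\mathcal{A},\mathcal{R}^-\cap\mathcal{S},\mathcal{R}^+\cap\mathcal{S},\tau\rangle$; for $\tau':\mathcal{A}\to[0,1]$, $\sigma_{\tau'}(\alpha)$ is the strength of $\alpha$ in $\langle\mathcal{A},\mathcal{R}^-,\mathcal{R}^+,\tau'\rangle$.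 The RAE is $\phi^\alpha_\sigma(r)=\sum_{\mathcal{S}\subseteq\mathcal{R}\setminus\{r\}}\frac{(|\mathcal{R}|-|\mathcal{S}|-1)!|\mathcal{S}|!}{|\mathcal{R}|!}[\sigma_{\mathcal{S}\cup\{r\}}(\alpha)-\sigma_{\mathcal{S}}(\alpha)]$. $\sigma$ satisfies monotonicity on a class of QBAFs if for every QBAF in the class, every $\alpha,\beta\in\mathcal{A}$ with $\alpha\neq\beta$ and $\mathcal{R}(\beta)=\{(\beta,\alpha)\}$, and every $\tau':\mathcal{A}\to[0,1]$: (1) if $(\beta,\alpha)\in\mathcal{R}^-$ then $\sigma(\alpha)\le\sigma_{\mathcal{R}\setminus\{(\beta,\alpha)\}}(\alpha)$; (2) if $(\beta,\alpha)\in\mathcal{R}^+$ then $\sigma(\alpha)\ge\sigma_{\mathcal{R}\setminus\{(\beta,\alpha)\}}(\alpha)$; (3) if $(\beta,\alpha)\in\mathcal{R}^-$, $\tau(\beta)\le\tau'(\beta)$ and $\tau'=\tau$ on $\mathcal{A}\setminus\{\beta\}$, then $\sigma(\alpha)\ge\sigma_{\tau'}(\alpha)$; (4) if $(\beta,\alpha)\in\mathcal{R}^+$, $\tau(\beta)\le\tau'(\beta)$ and $\tau'=\tau$ on $\mathcal{A}\setminus\{\beta\}$, then $\sigma(\alpha)\le\sigma_{\tau'}(\alpha)$. A path from $\gamma$ to $\alpha$ is a finite sequence of edges $(x_0,x_1),\dots,(x_{k-1},x_k)\in\mathcal{R}$ with $x_0=\gamma$, $x_k=\alpha$. An edge $(\beta,\gamma)\in\mathcal{R}$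 with $\beta\neq\alpha$ is multifold w.r.t. $\alpha$ if $\gamma\neq\alpha$ and there is more than one path from $\gamma$ to $\alpha$ in $\mathcal{Q}$. *)

From HB Require Import structures.
From mathcomp Require Import all_boot all_order all_algebra.
From mathcomp Require Import reals.
Set Implicit Arguments. Unset Strict Implicit. Unset Printing Implicit Defensive.
Import Order.TTheory GRing.Theory Num.Theory.
Local Open Scope ring_scope.

(* A QBAF over the finite set of arguments T (A = all of T). *)
Record qbaf (R : realType) (T : finType) := Qbaf {
  qatt : {set T * T};
  qsup : {set T * T};
  bs  : T -> R
}.

Section QBAF.
Variables (R : realType) (T : finType).
Implicit Types (Q : qbaf R T).

Definition rels Q : {set T * T} := qatt Q :|: qsup Q.

Definition wf_qbaf Q : Prop :=
  qatt Q :&: qsup Q = set0 /\ forall a, 0 <= bs Q a <= 1.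

Definition restrict Q (S : {set T * T}) : qbaf R T :=
  Qbaf (qatt Q :&: S) (qsup Q :&: S) (bs Q).

Definition rebase Q (tau' : T -> R) : qbaf R T := Qbaf (qatt Q) (qsup Q) tau'.

Definition out_edges Q (b : T) : {set T * T} := [set e in rels Q | e.1 == b].

Fixpoint is_path (E : {set T * T}) (g a : T) (s : seq (T * T)) : bool :=
  match s with
  | [::] => g == a
  | e :: s' => [&& e \in E, e.1 == g & is_path E e.2 a s']
  end.

Definition edge_rel Q : rel T := fun x y => (x, y) \in rels Q.

Definition qbaf_acyclic Q : Prop :=
  forall x y, edge_rel Q x y -> ~~ connect (edge_rel Q) y x.

Definition qbaf_multifold Q (a : T) (r : T * T) : Prop :=
  [/\ r \in rels Q, r.1 != a, r.2 != a &
      exists s1 s2, [/\ s1 != s2, is_path (rels Q) r.2 a s1 & is_path (rels Q) r.2 a s2]].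

End QBAF.

Definition semantics (R : realType) := forall T : finType, qbaf R T -> T -> R.

Definition strength_in_01 (R : realType) (sigma : semantics R) : Prop :=
  forall (T : finType) (Q : qbaf R T), wf_qbaf Q -> forall a, 0 <= sigma T Q a <= 1.

Definition monotonic_acyclic (R : realType) (sigma : semantics R) : Prop :=
  forall (T : finType) (Q : qbaf R T), wf_qbaf Q -> qbaf_acyclic Q ->
  forall (a b : T), a != b -> out_edges Q b = [set (b, a)] ->
  forall tau' : T -> R, (forall x, 0 <= tau' x <= 1) ->
  [/\ ((b, a) \in qatt Q -> sigma T Q a <= sigma T (restrict Q (rels Q :\ (b, a))) a),
      ((b, a) \in qsup Q -> sigma T Q a >= sigma T (restrict Q (rels Q :\ (b, a))) a),
      ((b, a) \in qatt Q -> bs Q b <= tau' b -> (forall x, x != b -> tau' x = bs Q x) ->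
         sigma T Q a >= sigma T (rebase Q tau') a) &
      ((b, a) \in qsup Q -> bs Q b <= tau' b -> (forall x, x != b -> tau' x = bs Q x) ->
         sigma T Q a <= sigma T (rebase Q tau') a)].

Definition rae (R : realType) (sigma : semantics R) (T : finType) (Q : qbaf R T)
    (a : T) (r : T * T) : R :=
  \sum_(S in powerset (rels Q :\ r))
    ((#|rels Q| - #|S| - 1)`!%:R * (#|S|)`!%:R / (#|rels Q|)`!%:R) *
    (sigma T (restrict Q (S :|: [set r])) a - sigma T (restrict Q S) a).

From HB Require Import structures.
From mathcomp Require Import all_boot all_order all_algebra.
From mathcomp Require Import reals.
Set Implicit Arguments. Unset Strict Implicit. Unset Printing Implicit Defensive.
Import Order.TTheory GRing.Theory Num.Theory.
Local Open Scope ring_scope.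

(* The semantics gives α strength 1 when some attacker c of α is itself
   attacked and has at least two outgoing edges, and strength 0 otherwise.
   Strength only grows with the edge set, so supports behave monotonically;
   an attack (b, α) whose source has a single outgoing edge is never the edge
   c -> α of such a witness (c branches) nor the attack on c (it ends in α,
   and c ≠ α by acyclicity), so removing it cannot lower the strength.  In the QBAF with attacks 0 -> 1 -> 3 and supports
   1 -> 2 -> 3, the attack (0, 1) is multifold w.r.t. 3, yet adding it to the
   other edges raises the strength of 3 from 0 to 1; since no addition ever
   lowers it, its attribution is positive. *)

Section QbafFacts.
Variables (R : realType) (T : finType).
Implicit Types (Q : qbaf R T) (S : {set T * T}).

Lemma mem_out_edges Q b e : (e \in out_edges Q b) = (e \in rels Q) && (e.1 == b).
Proof. by rewrite inE. Qed.

Lemma rels_restrict Q S : rels (restrict Q S) = rels Q :&: S.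
Proof. by rewrite /rels /= setIUl. Qed.

Lemma qatt_rels Q : qatt Q \subset rels Q.
Proof. exact: subsetUl. Qed.

Lemma acyclic_edge_neq Q x y : qbaf_acyclic Q -> (x, y) \in rels Q -> x != y.
Proof. by move=> ac xy; apply/eqP => exy; move: (ac x y xy); rewrite exy connect0. Qed.

Lemma acyclic_of_rank Q (f : T -> nat) :
  (forall x y, edge_rel Q x y -> f x < f y)%N -> qbaf_acyclic Q.
Proof.
move=> up.
have rank_path z p : path (edge_rel Q) z p -> (f z <= f (last z p))%N.
  elim: p z => [|w p IH] z //= /andP[/up zw /IH wp].
  exact: leq_trans (ltnW zw) wp.
move=> x y /up fxy; apply/negP => /connectP[p /rank_path yp exy].
by move: fxy; rewrite exy ltnNge yp.
Qed.

Lemma rae_gt0 (sigma : semantics R) Q a r S0 :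
  S0 \subset rels Q :\ r ->
  (forall S, S \subset rels Q :\ r ->
     sigma T (restrict Q S) a <= sigma T (restrict Q (S :|: [set r])) a) ->
  sigma T (restrict Q S0) a < sigma T (restrict Q (S0 :|: [set r])) a ->
  0 < rae sigma Q a r.
Proof.
move=> S0r mono gain; rewrite /rae (bigD1 S0) ?powersetE //=.
apply: ltr_wpDr.
  apply: sumr_ge0 => S /andP[]; rewrite powersetE => Sr _.
  by rewrite mulr_ge0 ?divr_ge0 ?mulr_ge0 ?ler0n ?subr_ge0 ?mono.
by rewrite mulr_gt0 ?subr_gt0 ?divr_gt0 ?mulr_gt0 ?ltr0n ?fact_gt0.
Qed.

Definition attacked_branching_attacker Q a : bool :=
  [exists c, exists d,
     [&& (c, a) \in qatt Q, (d, c) \in qatt Q & 1 < #|out_edges Q c|]%N].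

Lemma attacked_branching_attacker_sub Q1 Q2 a :
  qatt Q1 \subset qatt Q2 -> rels Q1 \subset rels Q2 ->
  attacked_branching_attacker Q1 a -> attacked_branching_attacker Q2 a.
Proof.
move=> sA sR /existsP[c /existsP[d /and3P[ca dc c_branch]]].
apply/existsP; exists c; apply/existsP; exists d.
rewrite (subsetP sA _ ca) (subsetP sA _ dc) (leq_trans c_branch) //.
apply/subset_leq_card/subsetP => e; rewrite !mem_out_edges => /andP[eQ ->].
by rewrite (subsetP sR _ eQ).
Qed.

Lemma attacked_branching_attacker_del Q a b :
  qbaf_acyclic Q -> out_edges Q b = [set (b, a)] ->
  attacked_branching_attacker Q a ->
  attacked_branching_attacker (restrict Q (rels Q :\ (b, a))) a.
Proof.
move=> ac outb /existsP[c /existsP[d /and3P[ca dc c_branch]]].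
have cb : c != b by apply: contraTneq c_branch => ->; rewrite outb cards1.
have dc_ba : (d, c) != (b, a).
  have : c != a by apply: acyclic_edge_neq ac (subsetP (qatt_rels Q) _ ca).
  by apply: contraNneq => -[_ ->].
apply/existsP; exists c; apply/existsP; exists d.
rewrite /= !inE ca dc dc_ba xpair_eqE (negbTE cb) /=.
rewrite (leq_trans c_branch) //; apply/subset_leq_card/subsetP => e.
rewrite !mem_out_edges rels_restrict !inE => /andP[-> /eqP ec].
by case: e ec => e1 e2 /= ->; rewrite xpair_eqE (negbTE cb) eqxx.
Qed.

End QbafFacts.

Definition sigma_fork (R : realType) : semantics R :=
  fun T Q a => (attacked_branching_attacker Q a)%:R.

Section SigmaFork.
Variables (R : realType) (T : finType).
Implicit Types (Q : qbaf R T).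

Lemma sigma_fork_in_01 : strength_in_01 (@sigma_fork R).
Proof. by move=> U Q _ a; rewrite ler0n lern1 leq_b1. Qed.

Lemma sigma_fork_le Q1 Q2 a :
  (attacked_branching_attacker Q1 a -> attacked_branching_attacker Q2 a) ->
  sigma_fork Q1 a <= sigma_fork Q2 a.
Proof. by rewrite ler_nat; case: (attacked_branching_attacker Q1 a) => // ->. Qed.

Lemma sigma_fork_restrict_le Q (S1 S2 : {set T * T}) a :
  S1 \subset S2 -> sigma_fork (restrict Q S1) a <= sigma_fork (restrict Q S2) a.
Proof.
move=> S12; apply/sigma_fork_le/attacked_branching_attacker_sub; first exact: setIS.
by rewrite !rels_restrict setIS.
Qed.

End SigmaFork.

Lemma sigma_fork_monotonic (R : realType) : monotonic_acyclic (@sigma_fork R).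
Proof.
move=> T Q _ ac a b _ outb tau' _; split => [_||_ _ _|_ _ _]; rewrite ?lexx //.
- exact/sigma_fork_le/attacked_branching_attacker_del.
- move=> _; apply/sigma_fork_le/attacked_branching_attacker_sub; first exact: subsetIl.
  by rewrite rels_restrict subsetIl.
Qed.

Definition o0 : 'I_4 := @Ordinal 4 0 isT.
Definition o1 : 'I_4 := @Ordinal 4 1 isT.
Definition o2 : 'I_4 := @Ordinal 4 2 isT.
Definition o3 : 'I_4 := @Ordinal 4 3 isT.

Definition fork_qbaf (R : realType) : qbaf R 'I_4 :=
  Qbaf [set (o0, o1); (o1, o3)] [set (o1, o2); (o2, o3)] (fun _ => 0).

Section ForkExample.
Variable R : realType.
Local Notation Q := (fork_qbaf R).
Local Notation r := (o0, o1).

Lemma fork_qbaf_wf : wf_qbaf Q.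
Proof.
split=> [|x]; last by rewrite lexx ler01.
apply/setP => -[x y]; rewrite !inE !xpair_eqE.
case: (x =P o1) => [->|_] /=; first by case: (y =P o3) => [->|_].
by case: (x =P o0) => [->|_]; rewrite ?andbF.
Qed.

Lemma fork_qbaf_acyclic : qbaf_acyclic Q.
Proof.
apply: (@acyclic_of_rank _ _ _ val) => x y.
rewrite /edge_rel /rels !inE !xpair_eqE.
by case/orP => /orP[] /andP[/eqP-> /eqP->].
Qed.

Lemma fork_qbaf_multifold : qbaf_multifold Q o3 r.
Proof.
split=> //; first by rewrite /rels !inE.
by exists [:: (o1, o3)], [:: (o1, o2); (o2, o3)]; split; rewrite /= ?/rels ?inE.
Qed.

Lemma fork_qbaf_gain :
  sigma_fork (restrict Q (rels Q :\ r)) o3 <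
  sigma_fork (restrict Q ((rels Q :\ r) :|: [set r])) o3.
Proof.
rewrite /sigma_fork.
have -> : attacked_branching_attacker (restrict Q (rels Q :\ r)) o3 = false.
  apply/negbTE/existsP => -[c /existsP[d]].
  rewrite /rels !inE !xpair_eqE /=.
  by case: (c =P o1) => [->|_] //=; case: (d =P o0) => [->|_] //=; rewrite !andbF.
have -> : attacked_branching_attacker (restrict Q ((rels Q :\ r) :|: [set r])) o3.
  apply/existsP; exists o1; apply/existsP; exists o0.
  rewrite /rels !inE /=.
  apply: leq_trans (subset_leq_card (_ : [set (o1, o2); (o1, o3)] \subset _)).
    by rewrite cards2.
  by apply/subsetP => e; rewrite !inE => /orP[] /eqP ->.
by rewrite ltr_nat.
Qed.

End ForkExample.

Theorem proposition8 (R : realType) :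
  exists sigma : semantics R,
    strength_in_01 sigma /\ monotonic_acyclic sigma /\
    exists (T : finType) (Q : qbaf R T) (a : T) (r : T * T),
      [/\ wf_qbaf Q, qbaf_acyclic Q, qbaf_multifold Q a r &
          ((r \in qatt Q /\ rae sigma Q a r > 0) \/ (r \in qsup Q /\ rae sigma Q a r < 0))].
Proof.
exists (@sigma_fork R); split; first exact: sigma_fork_in_01.
split; first exact: sigma_fork_monotonic.
exists ('I_4 : finType), (fork_qbaf R), o3, (o0, o1).
split; [exact: fork_qbaf_wf | exact: fork_qbaf_acyclic | exact: fork_qbaf_multifold |].
left; split; first by rewrite !inE.
apply: rae_gt0 (subxx _) _ (fork_qbaf_gain R) => S _.
exact/sigma_fork_restrict_le/subsetUl.
Qed.
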